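(* Assume the setting described in the context and suppose the event $\mathcal{E}$ holds. There is an absolute constant $C>0$ such that for any $\gamma\in(0,1)$, if $$ m\ \ge\ C\frac{(1+\theta)^2}{\theta^2(1-\gamma)^2}s^2(1)\log n, $$ then the set $S^{(1)}=\{j^\ast\}$, where $j^\ast$ maximizes $|\hat{\boldsymbol{\Gamma}}_{jj}|$ over $j\in[n]$, satisfies $$ \|\mathbf{v}_{S^{(1)}}\|_2\ \ge\ \sqrt{\frac{\gamma}{s(1)}}. $$
   Context: Let $n\ge 2$, $m\ge1$, $\theta>0$, $k\in[n]$; $\mathbf{v}\in\mathbb{R}^n$ a unit vector with at most $k$ nonzero entries; $\mathbf{x}_1,\dots,\mathbf{x}_m$ i.i.d. $\mathcal{N}(\mathbf{0},\mathbf{I}_n+\theta\mathbf{v}\mathbf{v}^\top)$; $\hat{\boldsymbol{\Gamma}}=\frac1m\sum_i\mathbf{x}_i\mathbf{x}_i^\top-\mathbf{I}_n$; $\mathbf{W}=\hat{\boldsymbol{\Gamma}}-\theta\mathbf{v}\mathbf{v}^\top$. $\mathbf{v}_S$ is the restriction of $\mathbf{v}$ to $S$, $\mathbf{W}_{S,S}$ a principal submatrix, $\|\cdot\|_2$ Euclidean/spectral norm. $v_{(1)}\ge v_{(2)}\ge\cdots$ are the sorted absolute entries of $\mathbf{v}$ and $s(p)=(\sum_{i=1}^pv_{(i)}^2)^{-1}$; in particular $s(1)=v_{(1)}^{-2}$. Fix an absolute constant $C_0>0$; $\mathcal{E}$ is the event that $\|\mathbf{W}_{S,S}\|_2\le C_0(1+\theta)\sqrt{|S|\log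 n/m}$ for all nonempty $S\subseteq[n]$. Absolute constants do not depend on $n,m,k,\theta,\mathbf{v},\gamma$. *)

From HB Require Import structures.
From mathcomp Require Import all_boot all_order all_algebra.
From mathcomp Require Import all_classical all_reals exp.
Set Implicit Arguments. Unset Strict Implicit. Unset Printing Implicit Defensive.
Import Order.TTheory GRing.Theory Num.Theory.
Local Open Scope ring_scope.
Local Open Scope classical_set_scope.

Section Defs.
Variable R : realType.

Definition vnorm2 q (u : 'cV[R]_q) : R := Num.sqrt (\sum_i (u i ord0) ^+ 2).

Definition specnorm p q (A : 'M[R]_(p, q)) : R :=
  sup [set vnorm2 (A *m u) | u in [set u : 'cV[R]_q | vnorm2 u <= 1]].

(* principal submatrix A_{S,S} (indices of S in increasing order) *)
Definition prinsub n (A : 'M[R]_n) (S : {set 'I_n}) : 'M[R]_#|S| :=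
  \matrix_(i < #|S|, j < #|S|) A (enum_val i) (enum_val j).

Definition restr_norm n (v : 'cV[R]_n) (S : {set 'I_n}) : R :=
  Num.sqrt (\sum_(i in S) (v i ord0) ^+ 2).

Definition vmax1 n (v : 'cV[R]_n) : R := \big[Num.max/0]_i `|v i ord0|.
Definition s1 n (v : 'cV[R]_n) : R := (vmax1 v ^+ 2)^-1.

Definition hatGamma n m (x : 'I_m -> 'cV[R]_n) : 'M[R]_n :=
  (m%:R)^-1 *: (\sum_i (x i *m (x i)^T)) - 1%:M.

Definition Wmat n m (x : 'I_m -> 'cV[R]_n) (theta : R) (v : 'cV[R]_n) : 'M[R]_n :=
  hatGamma x - theta *: (v *m v^T).

Definition eventE n m (x : 'I_m -> 'cV[R]_n) (theta : R) (v : 'cV[R]_n) (C0 : R) : Prop :=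
  forall S : {set 'I_n}, (0 < #|S|)%N ->
    specnorm (prinsub (Wmat x theta v) S)
      <= C0 * (1 + theta) * Num.sqrt (#|S|%:R * ln (n%:R) / m%:R).
End Defs.

From HB Require Import structures.
From mathcomp Require Import all_boot all_order all_algebra.
From mathcomp Require Import all_classical all_reals exp.
From mathcomp Require Import ring lra.

Set Implicit Arguments.
Unset Strict Implicit.
Unset Printing Implicit Defensive.

Import Order.TTheory GRing.Theory Num.Theory.
Local Open Scope ring_scope.

(* Gamma_jj = W_jj + theta v_j^2, and on E each |W_jj|, being the norm of a
   1x1 principal submatrix, is at most eps = C0 (1 + theta) sqrt(log n / m).
   Comparing the maximal diagonal entry with the one at a largest |v_j| gives
   theta v_(1)^2 - eps <= theta v_j*^2 + eps, and the sample-size condition is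
   exactly 2 eps <= theta (1 - gamma) v_(1)^2, whence v_j*^2 >= gamma v_(1)^2. *)

Section SpectralNorm.
Variable R : realType.

Lemma normr_le_vnorm2 q (u : 'cV[R]_q) i : `|u i ord0| <= vnorm2 u.
Proof.
rewrite /vnorm2 -sqrtr_sqr ler_sqrt ?sumr_ge0 // => [|j _]; last exact: sqr_ge0.
by rewrite (bigD1 i) //= lerDl sumr_ge0 // => j _; rewrite sqr_ge0.
Qed.

Lemma vnorm2_delta q (j : 'I_q) : vnorm2 (delta_mx j 0 : 'cV[R]_q) = 1.
Proof.
rewrite /vnorm2 (bigD1 j) //= big1 => [|i /negbTE nij]; last by rewrite mxE nij expr0n.
by rewrite mxE !eqxx expr1n addr0 sqrtr1.
Qed.

Lemma vnorm2_mulmx_le p q (A : 'M[R]_(p, q)) (u : 'cV[R]_q) : vnorm2 u <= 1 ->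
  vnorm2 (A *m u) <= vnorm2 (\col_k \sum_l `|A k l|).
Proof.
move=> u_le1; rewrite ler_sqrt ?sumr_ge0 // => [|k _]; last exact: sqr_ge0.
apply: ler_sum => k _; rewrite !mxE -real_normK ?num_real //.
rewrite ler_sqr ?nnegrE ?sumr_ge0 //.
apply: le_trans; first exact: ler_norm_sum.
apply: ler_sum => l _.
rewrite normrM ler_piMr //; apply: le_trans u_le1; exact: normr_le_vnorm2.
Qed.

Lemma mxentry_le_specnorm p q (A : 'M[R]_(p, q)) i j : `|A i j| <= specnorm A.
Proof.
have delta_in_ball : vnorm2 (delta_mx j 0 : 'cV[R]_q) <= 1 by rewrite vnorm2_delta.
have -> : A i j = col j A i ord0 by rewrite mxE.
rewrite colE.
apply: le_trans; first exact: normr_le_vnorm2.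
apply: sup_upper_bound; last by exists (delta_mx j 0).
split; first by exists (vnorm2 (A *m delta_mx j 0)), (delta_mx j 0).
by exists (vnorm2 (\col_k \sum_l `|A k l|)) => _ [u u_le1 <-]; exact: vnorm2_mulmx_le.
Qed.

End SpectralNorm.

Section DiagonalSelection.
Variable R : realType.

Lemma prinsub_set1 n (A : 'M[R]_n) i (j : 'I_#|[set i]|) :
  prinsub A [set i] j j = A i i.
Proof. by rewrite mxE; have /set1P -> := enum_valP j. Qed.

Lemma eventE_diag n m (x : 'I_m -> 'cV[R]_n) theta v C0 i :
  eventE x theta v C0 ->
  `|Wmat x theta v i i| <= C0 * (1 + theta) * Num.sqrt (ln n%:R / m%:R).
Proof.
have set1_gt0 : (0 < #|[set i]|)%N by rewrite cards1.
move=> /(_ _ set1_gt0).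
rewrite [in X in _ <= X]cards1 mul1r; apply: le_trans.
rewrite -(prinsub_set1 _ (enum_rank_in (set11 i) i)); exact: mxentry_le_specnorm.
Qed.

Lemma hatGamma_diag n m (x : 'I_m -> 'cV[R]_n) theta v i :
  hatGamma x i i = Wmat x theta v i i + theta * v i ord0 ^+ 2.
Proof. by rewrite !mxE big_ord1 !mxE expr2 subrK. Qed.

Lemma vmax1_attained n (v : 'cV[R]_n) : (0 < n)%N ->
  exists j, vmax1 v = `|v j ord0|.
Proof.
move=> n_gt0; pose i0 := Ordinal n_gt0.
by exists [arg max_(j > i0) `|v j ord0|]%O; rewrite /vmax1 (bigmax_eq_arg _ i0).
Qed.

Lemma max_diag_selection (theta eps gamma a2 b2 w0 w1 : R) :
  0 < theta -> `|w0| <= eps -> `|w1| <= eps -> 0 <= b2 ->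
  `|w0 + theta * a2| <= `|w1 + theta * b2| ->
  2 * eps <= theta * (1 - gamma) * a2 -> gamma * a2 <= b2.
Proof.
move=> theta_gt0 /ler_normlP[w0_ge _] w1_le b2_ge0 sel gap.
have lower := ler_norm (w0 + theta * a2).
have upper : `|w1 + theta * b2| <= `|w1| + theta * b2.
  have := ler_normD w1 (theta * b2).
  by rewrite [`|theta * b2|]ger0_norm // mulr_ge0 // ltW.
have gapE : theta * (1 - gamma) * a2 = theta * a2 - theta * (gamma * a2) by ring.
rewrite gapE in gap; rewrite -(ler_pM2l theta_gt0); lra.
Qed.

Lemma noise_le_gap (c L M t : R) : 0 <= c -> 0 <= L -> 0 < M -> 0 < t ->
  4 * c ^+ 2 * L / t ^+ 2 <= M -> 2 * (c * Num.sqrt (L / M)) <= t.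
Proof.
move=> c_ge0 L_ge0 M_gt0 t_gt0; rewrite ler_pdivrMr ?exprn_gt0 // => bound.
rewrite -ler_sqr ?nnegrE ?(ltW t_gt0) ?mulr_ge0 ?sqrtr_ge0 //.
rewrite !exprMn sqr_sqrtr ?divr_ge0 ?(ltW M_gt0) //.
have -> : 2 ^+ 2 * (c ^+ 2 * (L / M)) = 4 * c ^+ 2 * L / M by ring.
by rewrite ler_pdivrMr // [t ^+ 2 * M]mulrC.
Qed.

End DiagonalSelection.

Theorem proposition3 (R : realType) (C0 : R) (hC0 : 0 < C0) :
  exists C : R, 0 < C /\
  forall (n m k : nat) (theta : R) (v : 'cV[R]_n) (x : 'I_m -> 'cV[R]_n)
         (gamma : R) (jstar : 'I_n),
    (2 <= n)%N -> (1 <= m)%N -> 0 < theta -> (1 <= k <= n)%N ->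
    \sum_i (v i ord0) ^+ 2 = 1 ->
    (#|[set i | v i ord0 != 0%R]| <= k)%N ->
    eventE x theta v C0 ->
    0 < gamma < 1 ->
    m%:R >= C * (1 + theta) ^+ 2 / (theta ^+ 2 * (1 - gamma) ^+ 2)
              * (s1 v) ^+ 2 * ln (n%:R) ->
    (forall j : 'I_n, `|hatGamma x j j| <= `|hatGamma x jstar jstar|) ->
    restr_norm v [set jstar] >= Num.sqrt (gamma / s1 v).
Proof.
exists (4 * C0 ^+ 2); split; first by rewrite mulr_gt0 // exprn_gt0.
move=> n m k theta v x gamma jstar n_ge2 m_ge1 theta_gt0 _ _ _ hE
  /andP[gamma_gt0 gamma_lt1] m_large jstar_max.
have [j0 vmax1E] := vmax1_attained v (ltnW n_ge2).
rewrite /restr_norm big_set1 /s1 vmax1E real_normK ?num_real // in m_large *.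
(* If v = 0 then s(1) = 0^-1 = 0 and the bound is trivial. *)
have [-> | v_j0_neq0] := eqVneq (v j0 ord0) 0.
  by rewrite expr0n !invr0 mulr0 sqrtr0 sqrtr_ge0.
rewrite invrK ler_sqrt ?sqr_ge0 //.
apply: (max_diag_selection theta_gt0 (eventE_diag j0 hE) (eventE_diag jstar hE) (sqr_ge0 _)).
  by rewrite -!hatGamma_diag.
have gap_gt0 : 0 < theta * (1 - gamma) * v j0 ord0 ^+ 2.
  by rewrite mulr_gt0 ?exprn_even_gt0 ?v_j0_neq0 ?orbT // mulr_gt0 ?subr_gt0.
apply: noise_le_gap => //.
- by rewrite mulr_ge0 ?addr_ge0 ?ltW.
- by rewrite ln_ge0 // ler1n ltnW.
- by rewrite ltr0n.
apply: le_trans m_large; rewrite le_eqVlt; apply/predU1P; left.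
by field; rewrite v_j0_neq0 !gt_eqF ?subr_gt0.
Qed.
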